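(* Let $0<a,b<1$, $r>as$, $s>br$, and consider the variable-control system $$x_{n+1}=x_n[(1-\alpha_{n+1})e^{r-x_n-ay_n}+\alpha_{n+1}],\quad y_{n+1}=y_n[(1-\beta_{n+1})e^{s-bx_n-y_n}+\beta_{n+1}],\quad n\in\mathbb N_0.$$ The equilibrium $K=(p,q)$ is locally asymptotically stable if either of the following holds: (a) there exist $\lambda\in(0,1)$, a norm on $\mathbb R^2$ (with induced matrix norm $\|\cdot\|$) and constants $0\le\alpha_*<\alpha^*<1$, $0\le\beta_*<\beta^*<1$ such that for all $n$, $\alpha_n\in(\alpha_*,\alpha^* )$, $\beta_n\in(\beta_*,\beta^* )$ and $\|J_{\alpha_n,\beta_n}\|\le\lambda$; (b) there are constants $0\le\alpha_*<\alpha^*<1$, $0\le\beta_*<\beta^*<1$ with $\alpha_*\in\big(\max\{1-\frac{2}{p(1+a)},0\},1\big)$, $\beta_*\in\big(\max\{1-\frac{2}{q(1+b)},0\},1\big)$, and $\alpha_n\in(\alpha_*,\alpha^* )$, $\beta_n\in(\beta_*,\beta^* )$ for all $n\in\mathbb N_0$.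
   Context: $p=\frac{r-as}{1-ab}$, $q=\frac{s-br}{1-ab}$, $K=(p,q)$. For $\alpha,\beta\in[0,1)$ the Jacobian of the controlled Ricker map at $K$ is $J_{\alpha,\beta}=\begin{pmatrix}1-(1-\alpha)p & -a(1-\alpha)p\\ -b(1-\beta)q & 1-(1-\beta)q\end{pmatrix}$. *)

From HB Require Import structures.
From mathcomp Require Import all_boot all_order all_algebra.
From mathcomp Require Import all_classical all_reals all_analysis.
Set Implicit Arguments. Unset Strict Implicit. Unset Printing Implicit Defensive.
Import Order.TTheory GRing.Theory Num.Theory.
Import numFieldNormedType.Exports.
Local Open Scope classical_set_scope.
Local Open Scope ring_scope.

Section Defs.
Variable R : realType.

Definition peq (a b r s : R) : R := (r - a * s) / (1 - a * b).
Definition qeq (a b r s : R) : R := (s - b * r) / (1 - a * b).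

Definition Jac (a b r s al be : R) : 'M[R]_2 :=
  let p := peq a b r s in let q := qeq a b r s in
  \matrix_(i < 2, j < 2)
    if (i : nat) == 0%N then
      (if (j : nat) == 0%N then 1 - (1 - al) * p else - a * (1 - al) * p)
    else
      (if (j : nat) == 0%N then - b * (1 - be) * q else 1 - (1 - be) * q).

Definition is_norm (N : 'cV[R]_2 -> R) : Prop :=
  [/\ forall v, N v = 0 -> v = 0,
      forall (c : R) v, N (c *: v) = `|c| * N v
    & forall u v, N (u + v) <= N u + N v].

Definition induced_norm (N : 'cV[R]_2 -> R) (A : 'M[R]_2) : R :=
  sup [set N (A *m v) | v in [set v | N v <= 1]].

(* the variable-control system; al n, be n are alpha_n, beta_n;
   step n -> n+1 uses alpha_{n+1}, beta_{n+1} *)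
Fixpoint traj (a b r s : R) (al be : nat -> R) (x0 y0 : R) (n : nat) : R * R :=
  match n with
  | 0%N => (x0, y0)
  | n'.+1 =>
      let z := traj a b r s al be x0 y0 n' in
      let x := z.1 in let y := z.2 in
      (x * ((1 - al n) * expR (r - x - a * y) + al n),
       y * ((1 - be n) * expR (s - b * x - y) + be n))
  end.

Definition LAS (a b r s : R) (al be : nat -> R) : Prop :=
  let p := peq a b r s in let q := qeq a b r s in
  (forall eps : R, 0 < eps -> exists2 del : R, 0 < del &
     forall x0 y0 : R, `|x0 - p| < del -> `|y0 - q| < del ->
       forall n, `|(traj a b r s al be x0 y0 n).1 - p| < eps /\
                 `|(traj a b r s al be x0 y0 n).2 - q| < eps)
  /\
  (exists2 del : R, 0 < del &
     forall x0 y0 : R, `|x0 - p| < del -> `|y0 - q| < del ->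
       ((fun n => (traj a b r s al be x0 y0 n).1) @ \oo --> p) /\
       ((fun n => (traj a b r s al be x0 y0 n).2) @ \oo --> q)).

End Defs.

(* Let [d_n] be the deviation of the orbit from [K].  Since [e^(-w) = 1 - w + O(w^2)], one
   step of the map reads [d_(n+1) = J_(n+1) d_n + rho_n] with [rho_n = O(|d_n|^2)] uniformly in
   the controls.  If every [J_n] contracts a fixed norm by [lam < 1], the quadratic remainder is
   absorbed close to [K], the norm of [d_n] decays like [((1 + lam) / 2)^n], and both stability
   and attraction follow.  In case (a) the norm is given (and, like every norm on the plane, is
   equivalent to the max norm); in case (b) the bounds on [alpha_*] and [beta_*] make every row
   of [J_n] have absolute row sum uniformly below [1], so [J_n] contracts the max norm. *)

From HB Require Import structures.
From mathcomp Require Import all_boot all_order all_algebra.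
From mathcomp Require Import all_classical all_reals all_analysis.
From mathcomp Require Import ring lra.
Import Order.TTheory GRing.Theory Num.Theory.
Import numFieldNormedType.Exports.
Set Implicit Arguments. Unset Strict Implicit. Unset Printing Implicit Defensive.
Local Open Scope classical_set_scope.
Local Open Scope ring_scope.

Section MaxNorm.
Variable R : realDomainType.

Definition maxnorm (u v : R) : R := Num.max `|u| `|v|.

Lemma ler_maxnorml (u v : R) : `|u| <= maxnorm u v.
Proof. by rewrite le_max lexx. Qed.

Lemma ler_maxnormr (u v : R) : `|v| <= maxnorm u v.
Proof. by rewrite le_max lexx orbT. Qed.

Lemma maxnorm_ge0 (u v : R) : 0 <= maxnorm u v.
Proof. exact: le_trans (normr_ge0 u) (ler_maxnorml u v). Qed.

Lemma maxnormC (u v : R) : maxnorm u v = maxnorm v u.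
Proof. by rewrite /maxnorm maxC. Qed.

Lemma maxnorm_le (u v m : R) : (maxnorm u v <= m) = (`|u| <= m) && (`|v| <= m).
Proof. by rewrite ge_max. Qed.

Lemma maxnormD (u1 v1 u2 v2 : R) :
  maxnorm (u1 + u2) (v1 + v2) <= maxnorm u1 v1 + maxnorm u2 v2.
Proof.
have := ler_maxnorml u1 v1; have := ler_maxnormr u1 v1.
have := ler_maxnorml u2 v2; have := ler_maxnormr u2 v2.
rewrite maxnorm_le; move=> *; apply/andP; split; apply: le_trans (ler_normD _ _) _; lra.
Qed.

End MaxNorm.

Lemma expRN_remainder (R : realType) (w : R) :
  `|w| <= 1/2 -> 0 <= expR (- w) - 1 + w <= 2 * w ^+ 2.
Proof.
move=> hw; have h1 := expR_ge1Dx (- w); have h2 := expR_ge1Dx w.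
have hE := expR_gt0 (- w).
have hinv : expR (- w) * expR w = 1 by rewrite expRN mulVf // gt_eqF // expR_gt0.
move: hw; rewrite ler_norml => /andP[hw1 hw2].
have h4 : expR (- w) * (1 + w) <= 1.
  by rewrite -[leRHS]hinv; apply: ler_wpM2l => //; apply: ltW.
apply/andP; split; [lra | nra].
Qed.

(* With [w := (x - p) + a (y - q)] the map is [x ((1 - al) e^(-w) + al)], and the error of its
   linearization is [(1 - al) (p (e^(-w) - 1 + w) + (x - p) (e^(-w) - 1))]. *)
Lemma ricker_linearization (R : realType) (p q a r al x y m : R) :
  p + a * q = r -> 0 <= p -> 0 < a < 1 -> 0 <= al < 1 ->
  `|x - p| <= m -> `|y - q| <= m -> m <= 1/4 ->
  `|x * ((1 - al) * expR (r - x - a * y) + al) - p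
     - ((1 - (1 - al) * p) * (x - p) + (- a * (1 - al) * p) * (y - q))|
    <= (8 * p + 4) * m ^+ 2.
Proof.
move=> ep hp /andP[ha0 ha1] /andP[hal0 hal1] hu hv hm.
set u := x - p in hu *; set v := y - q in hv *; set w := u + a * v.
set h := expR (- w) - 1 + w.
have -> : x * ((1 - al) * expR (r - x - a * y) + al) - p
     - ((1 - (1 - al) * p) * u + (- a * (1 - al) * p) * v)
   = (1 - al) * (p * h + u * (h - w)).
  have -> : r - x - a * y = - w by rewrite /w /u /v -ep; ring.
  by rewrite /h /w /u /v; ring.
have hm0 : 0 <= m := le_trans (normr_ge0 u) hu.
have hw : `|w| <= 2 * m.
  apply: le_trans (ler_normD _ _) _; rewrite normrM (gtr0_norm ha0).
  have : a * `|v| <= `|v| by apply: ler_piMl; rewrite ?normr_ge0 ?ltW.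
  lra.
have /andP[hh0 hh2] : 0 <= h <= 2 * `|w| ^+ 2.
  by rewrite real_normK ?num_real //; apply: expRN_remainder; lra.
have hW0 := normr_ge0 w.
have hW2 : `|w| ^+ 2 <= 4 * m ^+ 2.
  by rewrite !expr2; nra.
have hph : p * h <= 8 * p * m ^+ 2 by nra.
have huh : `|u| * (h + `|w|) <= 4 * m ^+ 2.
  have : `|u| * (h + `|w|) <= m * (8 * m ^+ 2 + 2 * m).
    by apply: ler_pM; [exact: normr_ge0 | exact: addr_ge0 | | lra].
  have : 0 <= m * m * (1/4 - m) by rewrite !mulr_ge0 //; lra.
  rewrite !expr2; nra.
have hrem : `|p * h + u * (h - w)| <= (8 * p + 4) * m ^+ 2.
  apply: le_trans (ler_normD _ _) _.
  rewrite normrM (ger0_norm hp) (ger0_norm hh0) normrM.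
  have : `|h - w| <= h + `|w| by rewrite -[in leRHS](ger0_norm hh0) ler_normB.
  have := normr_ge0 u; nra.
rewrite normrM (ger0_norm (_ : 0 <= 1 - al)); last lra.
have := normr_ge0 (p * h + u * (h - w)); nra.
Qed.

(* The threshold on [u 0] makes the quadratic term use up at most half of the gap [1 - lam]:
   [lam + B u n <= (1 + lam) / 2]. *)
Lemma quadratic_perturbation_decay (R : realFieldType) (lam B d : R) (u : nat -> R) :
  0 <= lam < 1 -> 0 < B -> (forall n, 0 <= u n) ->
  (forall n, u n <= d -> u n.+1 <= (lam + B * u n) * u n) ->
  u 0 <= Num.min d ((1 - lam) / (2 * B)) ->
  forall n, u n <= ((1 + lam) / 2) ^+ n * u 0.
Proof.
move=> /andP[hlam0 hlam1] hB hu hstep; rewrite le_min => /andP[hd hBu0].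
set mu := (1 + lam) / 2.
have hmu0 : 0 <= mu by rewrite /mu; lra.
have hmu1 : mu <= 1 by rewrite /mu; lra.
have hBu : B * u 0 <= (1 - lam) / 2.
  by move: hBu0; rewrite ler_pdivlMr ?mulr_gt0 //; lra.
elim=> [|n IH]; first by rewrite expr0 mul1r.
have hun : u n <= u 0.
  exact: le_trans IH (ler_piMl (hu 0) (exprn_ile1 n hmu0 hmu1)).
apply: le_trans (hstep n (le_trans hun hd)) _.
have hBun : B * u n <= B * u 0 by rewrite ler_wpM2l // ltW.
rewrite exprS -mulrA.
apply: (@le_trans _ _ (mu * u n)); last exact: ler_wpM2l.
by rewrite ler_wpM2r // /mu; lra.
Qed.

Section Vec2.
Variable R : pzRingType.

Definition vec2 (u v : R) : 'cV[R]_2 :=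
  \col_(i < 2) (if (i : nat) == 0%N then u else v).

Lemma vec2D (u1 v1 u2 v2 : R) : vec2 (u1 + u2) (v1 + v2) = vec2 u1 v1 + vec2 u2 v2.
Proof. by apply/matrixP => i j; rewrite !mxE; case: ifP. Qed.

Lemma vec2Z (k u v : R) : vec2 (k * u) (k * v) = k *: vec2 u v.
Proof. by apply/matrixP => i j; rewrite !mxE; case: ifP. Qed.

Lemma vec2_split (u v : R) : vec2 u v = u *: vec2 1 0 + v *: vec2 0 1.
Proof. by rewrite -!vec2Z -vec2D !mulr1 !mulr0 addr0 add0r. Qed.

Lemma vec2E (w : 'cV[R]_2) : w = vec2 (w ord0 ord0) (w ord_max ord0).
Proof.
apply/matrixP => i j; rewrite !mxE (ord1 j).
by case: i => [[|[|//]]] hi /=; congr (w _ _); apply: val_inj.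
Qed.

Lemma vec2_eq0 (u v : R) : vec2 u v = 0 -> u = 0 /\ v = 0.
Proof.
move=> h; have := congr1 (fun w : 'cV[R]_2 => w ord0 ord0) h.
have := congr1 (fun w : 'cV[R]_2 => w ord_max ord0) h.
by rewrite !mxE.
Qed.

End Vec2.

Lemma Jac_vec2 (R : realType) (a b r s al be u v : R) :
  Jac a b r s al be *m vec2 u v =
  vec2 ((1 - (1 - al) * peq a b r s) * u + (- a * (1 - al) * peq a b r s) * v)
       ((- b * (1 - be) * qeq a b r s) * u + (1 - (1 - be) * qeq a b r s) * v).
Proof.
apply/matrixP => i j; rewrite !mxE !big_ord_recr big_ord0 /= !mxE /=.
by case: i => [[|[|//]]] hi /=; rewrite add0r.
Qed.

Section RickerDeviation.
Variables (R : realType) (a b r s : R) (al be : nat -> R).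
Hypotheses (ha : 0 < a < 1) (hb : 0 < b < 1) (hr : a * s < r) (hs : b * r < s).
Hypothesis hctrl : forall n, 0 <= al n < 1 /\ 0 <= be n < 1.

Local Notation p := (peq a b r s).
Local Notation q := (qeq a b r s).
Local Notation dx x0 y0 n := ((traj a b r s al be x0 y0 n).1 - p).
Local Notation dy x0 y0 n := ((traj a b r s al be x0 y0 n).2 - q).

Lemma mul_coef_lt1 : a * b < 1.
Proof.
case/andP: ha => ha0 ha1; case/andP: hb => hb0 hb1.
by rewrite -[1]mul1r ltr_pM // ltW.
Qed.

Lemma peq_gt0 : 0 < p.
Proof. by rewrite divr_gt0 // subr_gt0 // mul_coef_lt1. Qed.

Lemma qeq_gt0 : 0 < q.
Proof. by rewrite divr_gt0 // subr_gt0 // mul_coef_lt1. Qed.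

Lemma equilibrium_eqs : p + a * q = r /\ q + b * p = s.
Proof.
have hab : 1 - a * b != 0 by rewrite subr_eq0 eq_sym lt_eqF // mul_coef_lt1.
by rewrite /peq /qeq; split; field.
Qed.

Lemma deviation_step x0 y0 n :
  let m := maxnorm (dx x0 y0 n) (dy x0 y0 n) in m <= 1/4 ->
  exists rho1 rho2,
    vec2 (dx x0 y0 n.+1) (dy x0 y0 n.+1)
      = Jac a b r s (al n.+1) (be n.+1) *m vec2 (dx x0 y0 n) (dy x0 y0 n) + vec2 rho1 rho2
    /\ maxnorm rho1 rho2 <= (8 * (p + q) + 4) * m ^+ 2.
Proof.
move=> m hm; have [eqx eqy] := equilibrium_eqs.
have [hal hbe] := hctrl n.+1.
set x := (traj a b r s al be x0 y0 n).1 in m hm *.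
set y := (traj a b r s al be x0 y0 n).2 in m hm *.
have hxm := ler_maxnorml (x - p) (y - q); have hym := ler_maxnormr (x - p) (y - q).
have hp := ltW peq_gt0; have hq := ltW qeq_gt0.
have Hx := ricker_linearization eqx hp ha hal hxm hym hm.
have Hy := ricker_linearization eqy hq hb hbe hym hxm hm.
rewrite (_ : s - y - b * x = s - b * x - y) in Hy; last by ring.
set J := Jac a b r s (al n.+1) (be n.+1) *m vec2 (x - p) (y - q).
exists (dx x0 y0 n.+1 - J ord0 ord0), (dy x0 y0 n.+1 - J ord_max ord0); split.
  by rewrite {1}(vec2E J) -vec2D !subrKC.
rewrite /J Jac_vec2 !mxE /= -/x -/y [- b * _ * _ * _ + _]addrC maxnorm_le; apply/andP; split.
- apply: le_trans Hx _; apply: ler_wpM2r; rewrite ?exprn_ge0 ?maxnorm_ge0 //; lra.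
- apply: le_trans Hy _; apply: ler_wpM2r; rewrite ?exprn_ge0 ?maxnorm_ge0 //; lra.
Qed.

Lemma LAS_of_exponential_decay (M mu del : R) :
  0 <= M -> 0 <= mu < 1 -> 0 < del ->
  (forall x0 y0, `|x0 - p| < del -> `|y0 - q| < del -> forall n,
     maxnorm (dx x0 y0 n) (dy x0 y0 n) <= M * mu ^+ n * maxnorm (x0 - p) (y0 - q)) ->
  LAS a b r s al be.
Proof.
move=> hM /andP[hmu0 hmu1] hdel hdecay.
have hmun n : 0 <= mu ^+ n <= 1 by rewrite exprn_ge0 ?exprn_ile1 // ltW.
split=> [eps heps | ].
  exists (Num.min del (eps / (M + 1))) => [|x0 y0]; first by rewrite lt_min hdel divr_gt0 //; lra.
  rewrite !lt_min => /andP[hx hx'] /andP[hy hy'] n.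
  have hm0 : maxnorm (x0 - p) (y0 - q) < eps / (M + 1) by rewrite gt_max hx' hy'.
  have hmeps : M * maxnorm (x0 - p) (y0 - q) < eps.
    move: hm0; rewrite ltr_pdivlMr; last lra.
    by have := maxnorm_ge0 (x0 - p) (y0 - q); nra.
  have hdn := hdecay x0 y0 hx hy n.
  have hMn : M * mu ^+ n * maxnorm (x0 - p) (y0 - q) <= M * maxnorm (x0 - p) (y0 - q).
    have /andP[? ?] := hmun n.
    by rewrite mulrAC ler_piMr // mulr_ge0 // maxnorm_ge0.
  have := ler_maxnorml (dx x0 y0 n) (dy x0 y0 n).
  have := ler_maxnormr (dx x0 y0 n) (dy x0 y0 n).
  split; lra.
exists del => // x0 y0 hx hy.
set m0 := maxnorm (x0 - p) (y0 - q).
have hm0 : 0 <= m0 := maxnorm_ge0 _ _.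
suff hlim : forall eps, 0 < eps ->
    \forall n \near \oo, maxnorm (dx x0 y0 n) (dy x0 y0 n) <= eps.
  split; apply/cvgrPdist_le => eps /hlim; apply: filterS => n hn; rewrite distrC.
    exact: le_trans (ler_maxnorml _ _) hn.
  exact: le_trans (ler_maxnormr _ _) hn.
move=> eps heps.
have hMm0 : 0 <= M * m0 := mulr_ge0 hM hm0.
have ht : 0 < eps / (M * m0 + 1) by rewrite divr_gt0 //; lra.
have hmu : `|mu| < 1 by rewrite ger0_norm.
have /cvgrPdist_le /(_ _ ht) := cvg_expr hmu.
apply: filterS => n; rewrite sub0r normrN ger0_norm ?exprn_ge0 // => hn.
apply: le_trans (hdecay x0 y0 hx hy n) _; rewrite -/m0 mulrAC.
apply: le_trans (ler_wpM2l hMm0 hn) _.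
by rewrite mulrA ler_pdivrMr; [nra | lra].
Qed.

Section ContractingGauge.
Variables (N : 'cV[R]_2 -> R) (c C lam : R).
Hypotheses (hc : 0 < c) (hlam : 0 <= lam < 1).
Hypothesis hNmax : forall u v, c * maxnorm u v <= N (vec2 u v) <= C * maxnorm u v.
Hypothesis hND : forall v w, N (v + w) <= N v + N w.
Hypothesis hNJ : forall n v, N (Jac a b r s (al n) (be n) *m v) <= lam * N v.

Local Notation K := (8 * (p + q) + 4).
Local Notation gauge x0 y0 n := (N (vec2 (dx x0 y0 n) (dy x0 y0 n))).

Lemma gauge_ge0 u v : 0 <= N (vec2 u v).
Proof.
have /andP[+ _] := hNmax u v.
by apply: le_trans; rewrite mulr_ge0 ?maxnorm_ge0 ?ltW.
Qed.

Lemma gauge_const_gt0 : 0 < C.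
Proof.
have /andP[h1 h2] := hNmax 1 0; move: (le_trans h1 h2).
by rewrite /maxnorm normr1 normr0 max_l ?ler01 // !mulr1 => /(lt_le_trans hc).
Qed.

Lemma gauge_deviation_step x0 y0 n : gauge x0 y0 n <= c / 4 ->
  gauge x0 y0 n.+1 <= (lam + C * K / c ^+ 2 * gauge x0 y0 n) * gauge x0 y0 n.
Proof.
move=> hu; set g := gauge x0 y0 n in hu *.
set m := maxnorm (dx x0 y0 n) (dy x0 y0 n).
have /andP[hcm _] := hNmax (dx x0 y0 n) (dy x0 y0 n); rewrite -/m -/g in hcm.
have hm0 : 0 <= m := maxnorm_ge0 _ _.
have hm : m <= 1/4.
  by rewrite -(ler_pM2l hc); apply: le_trans hcm _; rewrite mul1r.
have [rho1 [rho2 [-> hrho]]] := deviation_step hm.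
apply: le_trans (hND _ _) _.
have hK : 0 < K by have := peq_gt0; have := qeq_gt0; lra.
have hC := gauge_const_gt0.
have hrhoN : N (vec2 rho1 rho2) <= C * K * m ^+ 2.
  have /andP[_ +] := hNmax rho1 rho2; move/le_trans; apply.
  by rewrite -mulrA ler_wpM2l // ltW.
have hm2 : C * K * m ^+ 2 <= C * K / c ^+ 2 * (g * g).
  have -> : C * K * m ^+ 2 = C * K / c ^+ 2 * ((c * m) * (c * m)).
    by field; rewrite lt0r_neq0.
  have hcm0 : 0 <= c * m by rewrite mulr_ge0 // ltW.
  apply: ler_wpM2l; last exact: ler_pM.
  by apply/ltW; rewrite divr_gt0 ?mulr_gt0 ?exprn_gt0.
rewrite mulrDl; apply: lerD; first exact: hNJ.
by rewrite -mulrA; apply: le_trans hrhoN hm2.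
Qed.

Theorem LAS_of_contracting_gauge : LAS a b r s al be.
Proof.
have hC := gauge_const_gt0.
have hK : 0 < K by have := peq_gt0; have := qeq_gt0; lra.
set B := C * K / c ^+ 2.
have hB : 0 < B by rewrite divr_gt0 ?mulr_gt0 ?exprn_gt0.
set d0 := Num.min (c / 4) ((1 - lam) / (2 * B)).
have hd0 : 0 < d0.
  by case/andP: hlam => ? ?; rewrite lt_min !divr_gt0 ?mulr_gt0 ?invr_gt0 ?exprn_gt0 //; lra.
apply: (@LAS_of_exponential_decay (C / c) ((1 + lam) / 2) (d0 / C)).
- by rewrite divr_ge0 ?ltW.
- by case/andP: hlam => ? ?; apply/andP; split; lra.
- by rewrite divr_gt0.
move=> x0 y0 hx hy n.
have hg0 : gauge x0 y0 0 <= C * maxnorm (x0 - p) (y0 - q).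
  by have /andP[_ ->] := hNmax (x0 - p) (y0 - q).
have hdecay := @quadratic_perturbation_decay _ lam B (c / 4) (fun n => gauge x0 y0 n)
  hlam hB (fun n => gauge_ge0 _ _) (@gauge_deviation_step x0 y0).
have hm0 : maxnorm (x0 - p) (y0 - q) < d0 / C by rewrite gt_max hx hy.
have hu0 : gauge x0 y0 0 <= d0.
  by apply: le_trans hg0 _; rewrite -ler_pdivlMl // mulrC ltW.
have /andP[hcn _] := hNmax (dx x0 y0 n) (dy x0 y0 n).
have hmun : 0 <= ((1 + lam) / 2) ^+ n by case/andP: hlam => ? ?; rewrite exprn_ge0 //; lra.
set mn := ((1 + lam) / 2) ^+ n in hdecay hmun *.
have -> : C / c * mn * maxnorm (x0 - p) (y0 - q) = c^-1 * (mn * (C * maxnorm (x0 - p) (y0 - q))).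
  by field; rewrite lt0r_neq0.
rewrite ler_pdivlMl //; apply: le_trans hcn (le_trans (hdecay hu0 n) _).
exact: ler_wpM2l.
Qed.

End ContractingGauge.

End RickerDeviation.

(* The row [(1 - t P, - A t P)] has absolute row sum [|1 - t P| + A t P], which is below the
   first entry of the max when [t P <= 1] and below the second one otherwise. *)
Lemma row_maxnorm_bound (R : realDomainType) (P A t t1 t2 u v : R) :
  0 < P -> 0 < A < 1 -> 0 < t1 -> t1 <= t <= t2 ->
  `|(1 - t * P) * u + (- A * t * P) * v|
    <= Num.max (1 - t1 * P * (1 - A)) (t2 * P * (1 + A) - 1) * maxnorm u v.
Proof.
move=> hP /andP[hA0 hA1] ht0 /andP[ht1 ht2].
have hm := maxnorm_ge0 u v.
have hAtP : 0 <= A * t * P by rewrite !mulr_ge0 //; lra.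
apply: le_trans (ler_normD _ _) _.
have eAtP : `|- A * t * P| = A * t * P by rewrite -mulrA mulNr normrN mulrA ger0_norm.
rewrite normrM [`|_ * v|]normrM eAtP.
have B1 : `|1 - t * P| * `|u| <= `|1 - t * P| * maxnorm u v.
  by apply: ler_wpM2l; rewrite ?ler_maxnorml.
have B2 : A * t * P * `|v| <= A * t * P * maxnorm u v.
  by apply: ler_wpM2l; rewrite ?ler_maxnormr.
apply: le_trans (lerD B1 B2) _; rewrite -mulrDl; apply: ler_wpM2r => //.
have hlo : t1 * (P * (1 - A)) <= t * (P * (1 - A)).
  by apply: ler_wpM2r => //; apply: mulr_ge0; lra.
have hhi : t * (P * (1 + A)) <= t2 * (P * (1 + A)).
  by apply: ler_wpM2r => //; apply: mulr_ge0; lra.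
rewrite le_max; case: (lerP (t * P) 1) => htP.
  by apply/orP; left; lra.
by apply/orP; right; lra.
Qed.

Lemma row_factor_lt1 (R : realDomainType) (P A t1 t2 : R) :
  0 < P -> 0 < A < 1 -> 0 < t1 -> t2 * P * (1 + A) < 2 ->
  Num.max (1 - t1 * P * (1 - A)) (t2 * P * (1 + A) - 1) < 1.
Proof.
move=> hP /andP[hA0 hA1] ht1 ht2; rewrite gt_max; apply/andP; split; last lra.
suff : 0 < t1 * P * (1 - A) by lra.
by rewrite !mulr_gt0 // subr_gt0.
Qed.

Lemma LAS_of_control_bounds (R : realType) (a b r s : R) (al be : nat -> R)
    (al_lo al_hi be_lo be_hi : R) :
  0 < a < 1 -> 0 < b < 1 -> a * s < r -> b * r < s ->
  al_hi < 1 -> be_hi < 1 ->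
  1 - 2 / (peq a b r s * (1 + a)) < al_lo -> 0 < al_lo ->
  1 - 2 / (qeq a b r s * (1 + b)) < be_lo -> 0 < be_lo ->
  (forall n, al_lo < al n < al_hi /\ be_lo < be n < be_hi) ->
  LAS a b r s al be.
Proof.
move=> ha hb hr hs hal hbe hpal hal0 hqbe hbe0 hctrl.
have hp := peq_gt0 ha hb hr; have hq := qeq_gt0 ha hb hs.
set p := peq a b r s in hp hpal *; set q := qeq a b r s in hq hqbe *.
case/andP: (ha) => ha0 ha1; case/andP: (hb) => hb0 hb1.
set lam1 := Num.max (1 - (1 - al_hi) * p * (1 - a)) ((1 - al_lo) * p * (1 + a) - 1).
set lam2 := Num.max (1 - (1 - be_hi) * q * (1 - b)) ((1 - be_lo) * q * (1 + b) - 1).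
have hlam1 : lam1 < 1.
  apply: row_factor_lt1; rewrite ?subr_gt0 //.
  by rewrite -mulrA -ltr_pdivlMr; [lra | apply: mulr_gt0; lra].
have hlam2 : lam2 < 1.
  apply: row_factor_lt1; rewrite ?subr_gt0 //.
  by rewrite -mulrA -ltr_pdivlMr; [lra | apply: mulr_gt0; lra].
set lam := Num.max (Num.max lam1 lam2) 0.
apply: (@LAS_of_contracting_gauge _ a b r s al be ha hb hr hs _
          (fun w => maxnorm (w ord0 ord0) (w ord_max ord0)) 1 1 lam) => //.
- by move=> n; have [/andP[? ?] /andP[? ?]] := hctrl n; split; apply/andP; split; lra.
- by rewrite /lam le_max lexx orbT /= gt_max ltr01 andbT gt_max hlam1 hlam2.
- by move=> u v; rewrite !mxE /= mul1r lexx.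
- by move=> v w; rewrite !mxE; exact: maxnormD.
move=> n v; have [/andP[? ?] /andP[? ?]] := hctrl n.
rewrite [v in Jac _ _ _ _ _ _ *m v]vec2E Jac_vec2 !mxE /= maxnorm_le; apply/andP; split.
  have hrow := @row_maxnorm_bound _ p a (1 - al n) (1 - al_hi) (1 - al_lo).
  apply: le_trans (hrow _ _ hp ha _ _) _; rewrite ?subr_gt0 //; first by apply/andP; split; lra.
  apply: ler_wpM2r; first exact: maxnorm_ge0.
  by rewrite /lam le_max; apply/orP; left; rewrite le_max lexx.
rewrite addrC maxnormC.
have hrow := @row_maxnorm_bound _ q b (1 - be n) (1 - be_hi) (1 - be_lo).
apply: le_trans (hrow _ _ hq hb _ _) _; rewrite ?subr_gt0 //; first by apply/andP; split; lra.
apply: ler_wpM2r; first exact: maxnorm_ge0.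
by rewrite /lam le_max; apply/orP; left; rewrite le_max lexx orbT.
Qed.

Lemma lipschitz_continuous (R : realType) (f : R -> R) (L : R) : 0 <= L ->
  (forall x y, `|f x - f y| <= L * `|x - y|) -> continuous f.
Proof.
move=> hL hf x; apply/cvgrPdist_le => eps heps.
have hd : 0 < eps / (L + 1) by rewrite divr_gt0 //; lra.
near=> y; apply: le_trans (hf x y) _.
have : `|x - y| <= eps / (L + 1) by near: y; exact: (cvgrPdist_le _ _).1.
rewrite ler_pdivlMr; last lra.
by have := normr_ge0 (x - y); nra.
Unshelve. all: by end_near.
Qed.

Section NormOnPlane.
Variables (R : realType) (N : 'cV[R]_2 -> R).
Hypothesis hN : is_norm N.

Lemma isnormZ k v : N (k *: v) = `|k| * N v.
Proof. by case: hN. Qed.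

Lemma isnormD v w : N (v + w) <= N v + N w.
Proof. by case: hN. Qed.

Lemma isnorm0 : N 0 = 0.
Proof. by rewrite -(scale0r 0) isnormZ normr0 mul0r. Qed.

Lemma isnorm_ge0 v : 0 <= N v.
Proof.
have := isnormD v ((-1) *: v); rewrite isnormZ normrN normr1 mul1r scaleN1r subrr isnorm0.
lra.
Qed.

Lemma isnorm_gt0 v : v != 0 -> 0 < N v.
Proof.
move=> hv; rewrite lt_def isnorm_ge0 andbT; apply: contra_neq hv.
case: hN => hdef _ _; exact: hdef.
Qed.

Lemma isnorm_mul_le_maxnorm (A : 'M[R]_2) u v :
  N (A *m vec2 u v) <= (N (A *m vec2 1 0) + N (A *m vec2 0 1)) * maxnorm u v.
Proof.
rewrite vec2_split mulmxDr -!scalemxAr; apply: le_trans (isnormD _ _) _.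
rewrite !isnormZ mulrDl.
by apply: lerD; rewrite mulrC ler_wpM2l ?isnorm_ge0 ?ler_maxnorml ?ler_maxnormr.
Qed.

(* [t |-> N (w + t d)] is [N d]-Lipschitz, so it attains its minimum on [[-1, 1]]. *)
Lemma isnorm_line_lower_bound (w d : 'cV[R]_2) : (forall t, w + t *: d != 0) ->
  exists2 c, 0 < c & forall t, -1 <= t <= 1 -> c <= N (w + t *: d).
Proof.
move=> hnz.
have hlip x y : `|N (w + x *: d) - N (w + y *: d)| <= N d * `|x - y|.
  have H x' y' : N (w + x' *: d) <= N (w + y' *: d) + N d * `|x' - y'|.
    rewrite (_ : w + x' *: d = (w + y' *: d) + (x' - y') *: d); last first.
      by rewrite scalerBl addrACA subrr addr0.
    by apply: le_trans (isnormD _ _) _; rewrite isnormZ mulrC.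
  rewrite ler_norml; apply/andP; split; last by have := H x y; lra.
  by have := H y x; rewrite distrC; lra.
have hcont := lipschitz_continuous (isnorm_ge0 d) hlip.
have hm11 : (-1 : R) <= 1 by lra.
have [t0 _ hmin] := EVT_min hm11 (continuous_subspaceT hcont).
exists (N (w + t0 *: d)); first exact: isnorm_gt0.
by move=> t ht; apply: hmin; rewrite in_itv.
Qed.

Lemma isnorm_ge_maxnorm : exists2 c, 0 < c & forall u v, c * maxnorm u v <= N (vec2 u v).
Proof.
have [|c1 hc1 H1] := @isnorm_line_lower_bound (vec2 1 0) (vec2 0 1).
  by move=> t; apply/eqP; rewrite -vec2Z -vec2D => /vec2_eq0[]; rewrite mulr0 addr0 => /eqP; rewrite oner_eq0.
have [|c2 hc2 H2] := @isnorm_line_lower_bound (vec2 0 1) (vec2 1 0).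
  by move=> t; apply/eqP; rewrite -vec2Z -vec2D => /vec2_eq0[] _; rewrite mulr0 addr0 => /eqP; rewrite oner_eq0.
exists (Num.min c1 c2) => [|u v]; first by rewrite lt_min hc1 hc2.
have hc0 : 0 <= Num.min c1 c2 by rewrite le_min !ltW.
have hmin1 : Num.min c1 c2 <= c1 by rewrite ge_min lexx.
have hmin2 : Num.min c1 c2 <= c2 by rewrite ge_min lexx orbT.
have [huv|huv] := lerP `|v| `|u|.
  rewrite /maxnorm max_l //; have [->|u0] := eqVneq u 0.
    by rewrite normr0 mulr0 isnorm_ge0.
  have -> : vec2 u v = u *: (vec2 1 0 + (v / u) *: vec2 0 1).
    by rewrite -!vec2Z -vec2D !mulr0 !mulr1 addr0 add0r -vec2Z mulr1 mulrC divfK.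
  rewrite isnormZ mulrC ler_wpM2l //; apply: le_trans hmin1 (H1 _ _).
  by rewrite -ler_norml normrM normfV ler_pdivrMr ?normr_gt0 // mul1r.
rewrite /maxnorm (max_r (ltW huv)); have v0 : v != 0 by rewrite -normr_gt0 (le_lt_trans _ huv).
have -> : vec2 u v = v *: (vec2 0 1 + (u / v) *: vec2 1 0).
  by rewrite -!vec2Z -vec2D !mulr0 !mulr1 addr0 add0r -vec2Z mulr1 mulrC divfK.
rewrite isnormZ mulrC ler_wpM2l //; apply: le_trans hmin2 (H2 _ _).
by rewrite -ler_norml normrM normfV ler_pdivrMr ?normr_gt0 // mul1r ltW.
Qed.

Lemma ler_induced_norm (A : 'M[R]_2) (z : 'cV[R]_2) :
  N (A *m z) <= induced_norm N A * N z.
Proof.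
have [c hc hlow] := isnorm_ge_maxnorm.
set S := [set N (A *m v) | v in [set v | N v <= 1]].
have hS : has_sup S.
  split; first by exists (N (A *m 0)), 0; rewrite //= isnorm0 ler01.
  exists ((N (A *m vec2 1 0) + N (A *m vec2 0 1)) / c) => _ [w /= hw <-].
  rewrite [w]vec2E; apply: le_trans (isnorm_mul_le_maxnorm _ _ _) _.
  rewrite mulrC [leRHS]mulrC ler_wpM2r ?addr_ge0 ?isnorm_ge0 //.
  rewrite -(ler_pM2l hc) mulfV ?gt_eqF //; apply: le_trans hw.
  by rewrite [in leRHS](vec2E w).
have [->|z0] := eqVneq z 0; first by rewrite mulmx0 isnorm0 mulr0.
have hz := isnorm_gt0 z0.
have hzi : 0 <= (N z)^-1 by rewrite invr_ge0; exact: ltW.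
have hSz : S (N (A *m ((N z)^-1 *: z))).
  by exists ((N z)^-1 *: z); rewrite //= isnormZ ger0_norm // mulVf ?gt_eqF.
move: (sup_upper_bound hS hSz); rewrite -scalemxAr isnormZ ger0_norm //.
by rewrite mulrC ler_pdivrMr.
Qed.

End NormOnPlane.

Lemma LAS_of_contracting_norm (R : realType) (a b r s : R) (al be : nat -> R)
    (N : 'cV[R]_2 -> R) (lam : R) :
  0 < a < 1 -> 0 < b < 1 -> a * s < r -> b * r < s ->
  (forall n, 0 <= al n < 1 /\ 0 <= be n < 1) ->
  is_norm N -> 0 <= lam < 1 ->
  (forall n, induced_norm N (Jac a b r s (al n) (be n)) <= lam) ->
  LAS a b r s al be.
Proof.
move=> ha hb hr hs hctrl hN hlam hJ.
have [c hc hlow] := isnorm_ge_maxnorm hN.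
apply: (LAS_of_contracting_gauge ha hb hr hs hctrl (N := N)
          (C := N (vec2 1 0) + N (vec2 0 1)) hc hlam).
- move=> u v; rewrite hlow /=.
  by have := isnorm_mul_le_maxnorm hN 1 u v; rewrite !mul1mx.
- exact: isnormD.
- move=> n v; apply: le_trans (ler_induced_norm hN _ _) _.
  by rewrite ler_wpM2r ?isnorm_ge0.
Qed.

Theorem mainTheorem7 (R : realType) (a b r s : R) (al be : nat -> R) :
  0 < a < 1 -> 0 < b < 1 -> a * s < r -> b * r < s ->
  ((exists lam : R, 0 < lam < 1 /\
      (exists N : 'cV[R]_2 -> R, is_norm N /\
      exists al_lo al_hi be_lo be_hi : R,
        [/\ 0 <= al_lo < al_hi, al_hi < 1,
            0 <= be_lo < be_hi, be_hi < 1 &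
            forall n : nat, [/\ al_lo < al n < al_hi, be_lo < be n < be_hi &
              induced_norm N (Jac a b r s (al n) (be n)) <= lam]]))
   \/
   (exists al_lo al_hi be_lo be_hi : R,
      [/\ 0 <= al_lo < al_hi, al_hi < 1,
          0 <= be_lo < be_hi, be_hi < 1 &
          [/\ Num.max (1 - 2 / (peq a b r s * (1 + a))) 0 < al_lo < 1,
               Num.max (1 - 2 / (qeq a b r s * (1 + b))) 0 < be_lo < 1 &
               forall n : nat, al_lo < al n < al_hi /\ be_lo < be n < be_hi]])) ->
  LAS a b r s al be.
Proof.
move=> ha hb hr hs [[lam [/andP[hlam0 hlam1] [N [hN [al_lo [al_hi [be_lo [be_hi
    [/andP[hal0 _] hal1 /andP[hbe0 _] hbe1 hn]]]]]]]]] |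
    [al_lo [al_hi [be_lo [be_hi [_ hal1 _ hbe1 [hal hbe hn]]]]]]].
  apply: (LAS_of_contracting_norm ha hb hr hs _ hN (lam := lam)).
  - by move=> n; have [/andP[? ?] /andP[? ?] _] := hn n; split; apply/andP; split; lra.
  - by rewrite hlam1 andbT ltW.
  - by move=> n; have [_ _ ->] := hn n.
move: hal hbe; rewrite !gt_max => /andP[/andP[hpal hal0] _] /andP[/andP[hqbe hbe0] _].
exact: LAS_of_control_bounds hal1 hbe1 hpal hal0 hqbe hbe0 hn.
Qed.
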